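(* For $n\ge 1$ and $P$ a Dyck $n$-path, the number of long interior inclines in $P$ plus the number of occurrences of $DXD$ in the elevated path $E(P)=UPD$ equals $n-1$.
   Context: A Dyck $n$-path is a path from $(0,0)$ to $(2n,0)$ with $n$ upsteps $U=(1,1)$ and $n$ downsteps $D=(1,-1)$ never going below the $x$-axis, written as a word in $U,D$. An ascent (resp. descent) is a maximal run of consecutive $U$s (resp. $D$s); an incline is an ascent or descent; it is long if it has at least two steps. The first ascent and last descent of a nonempty Dyck path are not interior; all other inclines are interior. A $DXD$ is an occurrence of $DUD$ or $DDD$ as three consecutive steps. $E(P)=UPD$ is obtained by prepending $U$ and appending $D$. *)

From mathcomp Require Import all_boot.
Set Implicit Arguments. Unset Strict Implicit. Unset Printing Implicit Defensive.

(* Steps: true = U = (1,1), false = D = (1,-1). A path is a word seq bool. *)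
Notation U := true.
Notation D := false.

Definition nU (p : seq bool) : nat := count id p.
Definition nD (p : seq bool) : nat := count negb p.

Definition dyck (n : nat) (p : seq bool) : bool :=
  [&& nU p == n, nD p == n &
      all (fun k => nD (take k p) <= nU (take k p)) (iota 0 (size p).+1)].

(* Run-length decomposition into maximal runs (inclines): each entry is
   (step, length of the run). *)
Fixpoint runs (p : seq bool) : seq (bool * nat) :=
  match p with
  | [::] => [::]
  | b :: q =>
      match runs q with
      | (c, k) :: r => if b == c then (c, k.+1) :: r else (b, 1) :: (c, k) :: r
      | [::] => [:: (b, 1)]
      end
  end.

Definition interior_inclines (p : seq bool) : seq (bool * nat) :=
  let r := runs p in
  take (size r).-2 (behead r).

Definition long_interior_inclines (p : seq bool) : nat :=
  count (fun r : bool * nat => 2 <= r.2) (interior_inclines p).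

Definition num_DXD (p : seq bool) : nat :=
  count (fun i => (nth U p i == D) && (nth U p i.+2 == D)) (iota 0 (size p).-2).

Definition elevate (p : seq bool) : seq bool := U :: rcons p D.

Example ex1 : runs [:: U; U; D; U; D; D] = [:: (U,2); (D,1); (U,1); (D,2)]. Proof. by []. Qed.
Example ex2 : interior_inclines [:: U; U; D; U; D; D] = [:: (D,1); (U,1)]. Proof. by []. Qed.
Example ex3 : long_interior_inclines [:: U;U;D;D;U;D] + num_DXD (elevate [:: U;U;D;D;U;D]) = 2. Proof. by []. Qed.
Example ex4 : long_interior_inclines [:: U;D;U;D;U;D] + num_DXD (elevate [:: U;D;U;D;U;D]) = 2. Proof. by []. Qed.
Example ex5 : long_interior_inclines [:: U;U;U;D;D;D] + num_DXD (elevate [:: U;U;U;D;D;D]) = 2. Proof. by []. Qed.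

From mathcomp Require Import all_boot.
From mathcomp Require Import zify.

(* Every [D] of a word [w] other than its last two steps starts either a
   [DXD] or a [DXU].  In a word starting with [U] and ending with [D], the
   [DXU]s are in bijection with the long interior inclines: [DDU] ends a long
   descent that is not the last one, and [DUU] starts a long ascent that is
   not the first one.  For a Dyck path [P] the [DXU]s of [P] and of [E(P)]
   coincide, so the quantity to compute is the number of [D]s among the first
   [2n] steps of [E(P)], i.e. [n - 1]. *)

Definition count_gap2 (pat : bool -> bool -> bool) (w : seq bool) : nat :=
  count (fun i => pat (nth U w i) (nth U w i.+2)) (iota 0 (size w).-2).

Definition num_DXU (w : seq bool) : nat :=
  count_gap2 (fun a c => (a == D) && (c == U)) w.

Lemma count_gap2_cons pat a q : 2 <= size q ->
  count_gap2 pat (a :: q) = pat a (nth U q 1) + count_gap2 pat q.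
Proof.
case: q => [|b [|c r]] // _.
rewrite /count_gap2 /= -[iota 1 _]/(iota (1 + 0) _) iotaDl count_map.
by congr (_ + _); apply: eq_count.
Qed.

Lemma count_gap2_rcons pat w c : (forall a, pat a c = false) ->
  count_gap2 pat (rcons w c) = count_gap2 pat w.
Proof.
move=> patF; elim: w => [|a q IH] //.
case: q IH => [|b [|d r]] IH //; first by rewrite [LHS]count_gap2_cons //= patF.
rewrite rcons_cons [LHS]count_gap2_cons ?size_rcons // IH nth_rcons /=.
by rewrite [RHS]count_gap2_cons.
Qed.

Lemma count_gap2_partition (pat1 pat2 : bool -> bool -> bool) (p : pred bool) w :
    (forall a c, pat1 a c + pat2 a c = p a) ->
  count_gap2 pat1 w + count_gap2 pat2 w = count p (take (size w).-2 w).
Proof.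
move=> patE; rewrite -(map_nth_iota0 U) ?count_map; last by rewrite -subn2 leq_subr.
rewrite /count_gap2; elim: (iota 0 _) => //= i s <-.
by rewrite -(patE _ (nth U w i.+2)) addnACA.
Qed.

Lemma runs_cons b q : runs (b :: q) =
  if runs q is (c, k) :: r then
    if b == c then (c, k.+1) :: r else (b, 1) :: (c, k) :: r
  else [:: (b, 1)].
Proof. by []. Qed.

Lemma first_run_cons c q : exists k r, [/\ runs (c :: q) = (c, k.+1) :: r,
  (0 < k) = (head (~~ c) q == c) & (r != [::]) = (~~ c \in q)].
Proof.
elim: q c => [|d q IH] c; first by exists 0, [::]; case: c.
rewrite runs_cons inE; have [k [r [-> _ r_nil]]] := IH d.
case: (eqVneq c d) r_nil => [<-|neq_cd] r_nil.
  by exists k.+1, r; rewrite r_nil; split=> //; case: c {r_nil}.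
by exists 0, ((d, k.+1) :: r); split=> //=; case: c d neq_cd {r_nil} => [] [].
Qed.

Lemma long_interior_inclines_cons b c q :
  long_interior_inclines [:: b, c & q] =
  long_interior_inclines (c :: q) + [&& b != c, head (~~ c) q == c & ~~ c \in q].
Proof.
have [k [r [runs_cq k_gt0 r_nil]]] := first_run_cons c q.
rewrite /long_interior_inclines /interior_inclines runs_cons runs_cq -k_gt0 -r_nil.
have [<-|_] := eqVneq b c; first by rewrite addn0.
by case: r {runs_cq r_nil} => [|x r] /=; rewrite ?andbF ?andbT addnC.
Qed.

(* The extra term detects a first incline that is a long descent followed by
   another incline: it ends with a [DDU] but is not interior. *)
Lemma long_interior_inclines_DXU w : last U w = D ->
  long_interior_inclines w + [&& head U w == D, nth U w 1 == D & U \in w] =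
  num_DXU w.
Proof.
elim: w => [|b q IH] //.
case: q IH => [|c [|d q]] IH; [by case: b | by case: b; case: c {IH} | move=> /= lastD].
have Dq : D \in d :: q by rewrite -lastD mem_last.
rewrite long_interior_inclines_cons /num_DXU count_gap2_cons // -/(num_DXU _) -IH //=.
move: (long_interior_inclines _) Dq; rewrite !inE.
by case: b; case: c {IH}; case: d {lastD} => /= L Dq; lia.
Qed.

Lemma num_DXD_add_DXU w : num_DXD w + num_DXU w = nD (take (size w).-2 w).
Proof.
by apply: (@count_gap2_partition (fun a c => (a == D) && (c == D))) => - [] [].
Qed.

Lemma num_DXU_elevate P : P != [::] -> num_DXU (elevate P) = num_DXU P.
Proof.
move=> P_neq0; rewrite /num_DXU count_gap2_cons ?size_rcons ?ltnS ?lt0n ?size_eq0 //.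
by rewrite count_gap2_rcons // => a; rewrite andbF.
Qed.

Lemma dyck_prefix {n P} k : dyck n P -> k <= size P -> nD (take k P) <= nU (take k P).
Proof. by case/and3P=> _ _ /allP prefP k_le; apply: prefP; rewrite mem_iota. Qed.

Lemma dyck_shape {n P} : 0 < n -> dyck n P -> exists Q, P = U :: rcons Q D.
Proof.
move=> n_gt0 dyckP; have /and3P [/eqP nUP /eqP nDP _] := dyckP.
case/lastP: P nUP nDP dyckP => [|s x] nUP nDP dyckP; first by rewrite -nUP in n_gt0.
have x_D : x = D.
  have := dyck_prefix (size s) dyckP; rewrite size_rcons leqnSn => /(_ isT).
  move: nUP nDP; rewrite -cats1 take_size_cat // /nU /nD !count_cat.
  by case: x {dyckP} => /=; lia.
subst x; case: s nUP {nDP} dyckP => [|a s] nUP dyckP.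
  by rewrite -nUP in n_gt0.
have a_U : a = U by have := dyck_prefix 1 dyckP isT; rewrite /= take0; case: a {nUP dyckP}.
by exists s; rewrite a_U.
Qed.

Theorem mainTheorem5 (n : nat) (P : seq bool) :
  1 <= n -> dyck n P ->
  long_interior_inclines P + num_DXD (elevate P) = n.-1.
Proof.
move=> n_gt0 dyckP; have [Q P_def] := dyck_shape n_gt0 dyckP.
have /and3P [_ /eqP <- _] := dyckP.
have := long_interior_inclines_DXU P.
rewrite {1}P_def [last _ _]/= last_rcons => /(_ erefl); rewrite P_def addn0 => ->.
rewrite -num_DXU_elevate // addnC num_DXD_add_DXU.
rewrite /elevate /= !size_rcons /= -!cats1 -catA take_size_cat //.
by rewrite /nD count_cat addn1.
Qed.
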